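(* Let $R$ be a commutative ring. Then $R$ is von Neumann regular if and only if every nonzero indecomposable $R$-module is simple.
   Context: All rings are commutative with identity; $R$ is von Neumann regular if for every $a\in R$ there is $x\in R$ with $a=a^2x$. *)

From mathcomp Require Import all_boot all_algebra.
Set Implicit Arguments. Unset Strict Implicit. Unset Printing Implicit Defensive.
Import GRing.Theory.
Local Open Scope ring_scope.

Definition von_neumann_regular (R : comPzRingType) : Prop :=
  forall a : R, exists x : R, a = a ^+ 2 * x.

Definition is_submodule (R : comPzRingType) (M : lmodType R) (S : M -> Prop) : Prop :=
  [/\ S 0, (forall x y, S x -> S y -> S (x + y)) & (forall (r : R) x, S x -> S (r *: x))].

Definition nonzero_module (R : comPzRingType) (M : lmodType R) : Prop :=
  exists m : M, m <> 0.

Definition simple_module (R : comPzRingType) (M : lmodType R) : Prop :=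
  nonzero_module M /\
  forall S : M -> Prop, is_submodule S ->
    (forall x, S x -> x = 0) \/ (forall x, S x).

Definition indecomposable_module (R : comPzRingType) (M : lmodType R) : Prop :=
  nonzero_module M /\
  forall A B : M -> Prop, is_submodule A -> is_submodule B ->
    (forall x : M, exists a b, [/\ A a, B b & x = a + b]) ->
    (forall x : M, A x -> B x -> x = 0) ->
    (forall x, A x -> x = 0) \/ (forall x, B x -> x = 0).

From HB Require Import structures.
From mathcomp Require Import all_boot all_algebra ring_quotient.
From mathcomp Require Import boolp classical_sets.
Set Implicit Arguments. Unset Strict Implicit. Unset Printing Implicit Defensive.
Import GRing.Theory.
Local Open Scope ring_scope.
Local Open Scope classical_set_scope.
Local Open Scope quotient_scope.

(* If R is von Neumann regular, every r gives an idempotent e = r x with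
   r = e r, so on an indecomposable module each r acts as 0 or invertibly.
   Then a submodule maximal among those meeting R s trivially (Zorn) is a
   complement of R s, hence 0, so M = R s for every nonzero s in M.
   Conversely, if a is not a multiple of a^2, take by Zorn an ideal I maximal
   among those containing a^2 but not a.  Every nonzero submodule of R/I
   contains a + I, so R/I is indecomposable, hence simple; but the annihilator
   of a in R/I contains a + I and not 1 + I. *)

Lemma Zorn_bigcup_above (T : Type) (P : set (set T)) (A0 : set T) :
  P A0 ->
  (forall F : set (set T), F !=set0 -> F `<=` P -> total_on F subset ->
    P (\bigcup_(X in F) X)) ->
  exists A, [/\ P A, A0 `<=` A & forall B, P B -> A `<=` B -> B `<=` A].
Proof.
move=> PA0 Pchain.
(* Zorn_bigcup also bounds the empty chain; shifting by A0 bounds it by A0. *)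
have [|A [PA Amax]] := @Zorn_bigcup T (fun B => P (A0 `|` B)).
  move=> F FP Ftot; have [[X FX]|/nonemptyPn->] := pselect (F !=set0); last first.
    by rewrite bigcup_set0 setU0.
  have -> : A0 `|` \bigcup_(X in F) X = \bigcup_(Y in setU A0 @` F) Y.
    apply/seteqP; split=> [x [A0x|[Y FY Yx]]|x [_ [Y FY <-] [A0x|Yx]]].
    - by exists (A0 `|` X); [exists X|left].
    - by exists (A0 `|` Y); [exists Y|right].
    - by left.
    - by right; exists Y.
  apply: Pchain; first by exists (A0 `|` X), X.
  - by move=> _ [Y FY <-]; apply: FP.
  - move=> _ _ [X1 FX1 <-] [X2 FX2 <-].
    by have [?|?] := Ftot _ _ FX1 FX2; [left|right]; apply: setUS.
exists (A0 `|` A); split=> // B PB AB.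
have A0B : A0 `<=` B by move=> x A0x; apply: AB; left.
apply: contrapT => nBA; apply: (Amax B).
  by split=> [x Ax|]; [apply: AB; right | move=> BA; apply: nBA => x /BA; right].
by rewrite (setUidPr _ _).2.
Qed.

Section Submodules.
Variables (R : comPzRingType) (M : lmodType R).
Implicit Types (S A B G : set M) (v : M).

Lemma is_submoduleB S : is_submodule S -> forall x y, S x -> S y -> S (x - y).
Proof. by case=> _ SD SZ x y Sx Sy; rewrite -scaleN1r; apply/SD/SZ. Qed.

Lemma is_submodule_scale_eq0 (r : R) : is_submodule (fun m : M => r *: m = 0).
Proof.
split=> [|x y rx ry|c x rx]; first exact: scaler0.
  by rewrite scalerDr rx ry addr0.
by rewrite scalerA mulrC -scalerA rx scaler0.
Qed.

Definition cyclic_submod v : set M := fun x => exists r, x = r *: v.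

Definition add_cyclic A v : set M := fun x => exists t r, A t /\ x = t + r *: v.

Lemma is_submodule_cyclic v : is_submodule (cyclic_submod v).
Proof.
split=> [|_ _ [r ->] [s ->]|c _ [r ->]]; first by exists 0; rewrite scale0r.
  by exists (r + s); rewrite scalerDl.
by exists (c * r); rewrite scalerA.
Qed.

Lemma is_submodule_add_cyclic A v : is_submodule A -> is_submodule (add_cyclic A v).
Proof.
case=> A0 AD AZ; split.
- by exists 0, 0; rewrite scale0r addr0.
- move=> _ _ [t [r [At ->]]] [t' [r' [At' ->]]].
  by exists (t + t'), (r + r'); rewrite scalerDl addrACA; split; first exact: AD.
- move=> c _ [t [r [At ->]]].
  by exists (c *: t), (c * r); rewrite scalerDr scalerA; split; first exact: AZ.
Qed.

Lemma add_cyclic_l A v : A `<=` add_cyclic A v.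
Proof. by move=> t At; exists t, 0; rewrite scale0r addr0. Qed.

Lemma add_cyclic_r A v : is_submodule A -> add_cyclic A v v.
Proof. by case=> A0 _ _; exists 0, 1; rewrite scale1r add0r. Qed.

Lemma is_submodule_zero : is_submodule [set 0 : M].
Proof. by split=> // [x y -> ->|r x ->]; rewrite ?addr0 ?scaler0. Qed.

Lemma maximal_submodule_exists G S0 : is_submodule S0 -> S0 `<=` G ->
  exists A, [/\ is_submodule A, S0 `<=` A, A `<=` G &
    forall y, ~ A y -> exists2 x, add_cyclic A y x & ~ G x].
Proof.
move=> S0sub S0G.
have [|A [[Asub AG] S0A Amax]] :=
    @Zorn_bigcup_above M (fun B => is_submodule B /\ B `<=` G) S0 (conj S0sub S0G).
  move=> F [X FX] FP Ftot; split; last by move=> x [Y /FP[_ YG] /YG].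
  split; first by exists X => //; have [[]] := FP X FX.
    move=> x y [X1 FX1 X1x] [X2 FX2 X2y].
    have [X12|X21] := Ftot _ _ FX1 FX2.
      by exists X2 => //; have [[_ + _] _] := FP X2 FX2; apply; first exact: X12.
    by exists X1 => //; have [[_ + _] _] := FP X1 FX1; apply => //; exact: X21.
  by move=> r x [Y FY Yx]; exists Y => //; have [[_ _ +] _] := FP Y FY; apply.
exists A; split=> // y Ay; apply: contrapT => noGfail; apply: Ay.
apply: (Amax (add_cyclic A y)); last exact: add_cyclic_r.
- split; first exact: is_submodule_add_cyclic.
  by move=> x Ax; apply: contrapT => nGx; apply: noGfail; exists x.
- exact: add_cyclic_l.
Qed.

Lemma indecomposable_idempotent (e : R) : e * e = e -> indecomposable_module M ->
  (forall m : M, e *: m = 0) \/ (forall m : M, e *: m = m).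
Proof.
move=> ee [_ indec].
have e_fix m : (1 - e) *: (e *: m) = 0.
  by rewrite scalerA mulrBl ee mul1r subrr scale0r.
have e_kill m : e *: ((1 - e) *: m) = 0.
  by rewrite scalerA mulrBr ee mulr1 subrr scale0r.
have [||eM0|e'M0] :=
  indec _ _ (is_submodule_scale_eq0 (1 - e)) (is_submodule_scale_eq0 e).
- move=> m; exists (e *: m), ((1 - e) *: m); split=> //.
  by rewrite -scalerDl addrC subrK scale1r.
- move=> m m_fix m_kill.
  by rewrite -[m]scale1r -(subrK e 1) scalerDl m_fix m_kill addr0.
- by left=> m; apply: eM0.
- right=> m; apply/eqP; rewrite eq_sym -subr_eq0 -[m in m - _]scale1r -scalerBl.
  exact/eqP/e'M0/e_kill.
Qed.

Lemma indecomposable_of_common_multiple v : v <> 0 ->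
  (forall q : M, q <> 0 -> exists c, v = c *: q) -> indecomposable_module M.
Proof.
move=> v0 vmul; split=> [|A B [_ _ AZ] [_ _ BZ] _ AB0]; first by exists v.
have [A0|/existsNP[a /not_implyP[Aa a0]]] := pselect (forall x, A x -> x = 0).
  by left.
right=> b Bb; apply: contrapT => b0; apply: v0; apply: AB0.
- by have [c ->] := vmul a a0; apply: AZ.
- by have [c ->] := vmul b b0; apply: BZ.
Qed.

End Submodules.

Section QuotientModule.
Variables (R : comPzRingType) (M : lmodType R) (S : set M).
Hypothesis Ssub : is_submodule S.

Definition submod_pred : {pred M} := fun x => `[< S x >].

Lemma submod_pred_zmod_closed : zmod_closed submod_pred.
Proof.
have [S0 _ _] := Ssub; split=> [|x y /asboolP Sx /asboolP Sy]; apply/asboolP => //.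
exact: is_submoduleB.
Qed.

HB.instance Definition _ := GRing.isZmodClosed.Build M submod_pred
  submod_pred_zmod_closed.

Local Notation Q := (Quotient.quot (submod_pred : zmodClosed M)).

Lemma piQ_eq x y : \pi_Q x = \pi_Q y <-> S (x - y).
Proof.
split=> [/eqP|Sxy]; first by rewrite -Quotient.idealrBE => /asboolP.
by apply/eqP; rewrite -Quotient.idealrBE; apply/asboolP.
Qed.

Definition quot_scale (r : R) (q : Q) : Q := \pi_Q (r *: repr q).

Lemma quot_scale_pi r x : quot_scale r (\pi_Q x) = \pi_Q (r *: x).
Proof.
have [_ _ SZ] := Ssub.
by apply/piQ_eq; rewrite -scalerBr; apply/SZ/piQ_eq; rewrite reprK.
Qed.

Lemma quot_scaleA a b q : quot_scale a (quot_scale b q) = quot_scale (a * b) q.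
Proof.
(* The inner scaling is rewritten first: otherwise quot_scale gets unfolded. *)
by move: q; apply: quotW => x; rewrite (quot_scale_pi b) !quot_scale_pi scalerA.
Qed.

Lemma quot_scale1 : left_id 1 quot_scale.
Proof. by apply: quotW => x; rewrite quot_scale_pi scale1r. Qed.

Lemma quot_scaleDr : right_distributive quot_scale +%R.
Proof.
move=> a p q; move: p q; apply: quotW => x; apply: quotW => y.
by rewrite -raddfD !quot_scale_pi scalerDr raddfD.
Qed.

Lemma quot_scaleDl q : {morph quot_scale^~ q : a b / a + b}.
Proof.
by move=> a b; move: q; apply: quotW => x; rewrite !quot_scale_pi scalerDl raddfD.
Qed.

Definition quotmod : Type := Q.
HB.instance Definition _ := GRing.Zmodule.on quotmod.
HB.instance Definition _ := GRing.Zmodule_isLmodule.Build R quotmod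
  quot_scaleA quot_scale1 quot_scaleDr quot_scaleDl.

Definition quotmod_pi (x : M) : quotmod := \pi_Q x.

Lemma quotmod_piD : {morph quotmod_pi : x y / x + y}.
Proof. exact: raddfD. Qed.

Lemma quotmod_piZ r x : quotmod_pi (r *: x) = r *: quotmod_pi x.
Proof. by rewrite /quotmod_pi -quot_scale_pi. Qed.

Lemma quotmod_pi_eq0 x : quotmod_pi x = 0 <-> S x.
Proof. by rewrite /quotmod_pi -(raddf0 \pi_Q) piQ_eq subr0. Qed.

Lemma quotmod_pi_surj (q : quotmod) : exists x, q = quotmod_pi x.
Proof. by exists (repr (q : Q)); rewrite /quotmod_pi reprK. Qed.

End QuotientModule.

Section RegularRing.
Variables (R : comPzRingType) (M : lmodType R).
Hypotheses (vnrR : von_neumann_regular R) (indecM : indecomposable_module M).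

Lemma vnr_scale_zero_or_invertible (r : R) :
  (forall m : M, r *: m = 0) \/ exists r', forall m : M, r' *: (r *: m) = m.
Proof.
have [x rx] := vnrR r.
have ee : r * x * (r * x) = r * x by rewrite mulrACA -expr2 mulrA -rx.
have [e0|e1] := indecomposable_idempotent ee indecM.
  by left=> m; rewrite [in LHS]rx expr2 -mulrA -scalerA e0 scaler0.
by right; exists x => m; rewrite scalerA mulrC e1.
Qed.

Lemma vnr_indecomposable_simple : simple_module M.
Proof.
have [nzM indec] := indecM; split=> // S [_ _ SZ].
have [S0|/existsNP[s /not_implyP[Ss s0]]] := pselect (forall x, S x -> x = 0).
  by left.
right.
pose G x := cyclic_submod s x -> x = 0.
have [|A [Asub _ AG Amax]] :=
  @maximal_submodule_exists _ M G [set 0] (is_submodule_zero M).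
  by move=> _ ->.
have spanM y : add_cyclic A s y.
  have [Ay|nAy] := pselect (A y); first exact: add_cyclic_l.
  have [_ [t [r [At ->]]] /not_implyP[[c tryE] tyr0]] := Amax y nAy.
  have [r0|[r' r'K]] := vnr_scale_zero_or_invertible r.
    by rewrite r0 addr0 in tryE tyr0; case: tyr0; apply: AG; last by exists c.
  have ry : r *: y = c *: s - t by rewrite -tryE addrC addKr.
  have [_ _ AZ] := Asub; exists ((- r') *: t), (r' * c); split; first exact: AZ.
  by rewrite -[y in LHS]r'K ry scalerBr scalerA scaleNr addrC.
have [||A0|s0'] := indec A (cyclic_submod s) Asub (is_submodule_cyclic s).
- move=> y; have [t [c [At ->]]] := spanM y.
  by exists t, (c *: s); split=> //; exists c.
- exact: AG.
- by move=> y; have [t [c [At ->]]] := spanM y; rewrite (A0 t At) add0r; apply: SZ.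
- by case: s0; apply: s0'; exists 1; rewrite scale1r.
Qed.

End RegularRing.

Lemma vnr_of_indecomposable_simple (R : comPzRingType) :
  (forall M : lmodType R, nonzero_module M -> indecomposable_module M -> simple_module M) ->
  von_neumann_regular R.
Proof.
move=> indec_simple a; apply: contrapT => not_vnr.
have [|I [Isub a2I Ia Imax]] := @maximal_submodule_exists _ R^o (fun x => x <> a)
    (cyclic_submod (a ^+ 2 : R^o)) (is_submodule_cyclic _).
  by move=> _ [r ->] ra; apply: not_vnr; exists r; rewrite -[a in LHS]ra mulrC.
pose pi := quotmod_pi Isub.
have pia : pi a <> 0 by move/quotmod_pi_eq0/Ia.
have a_mul q : q <> 0 -> exists c, pi a = c *: q.
  move=> q0; have [u qu] := quotmod_pi_surj q.
  have nIu : ~ I u by move=> /(quotmod_pi_eq0 Isub); rewrite -qu.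
  have [_ [t [c [It ->]]] /contrapT tca] := Imax u nIu.
  exists c; rewrite -tca /pi quotmod_piD quotmod_piZ -qu.
  by rewrite (proj2 (quotmod_pi_eq0 Isub t) It) add0r.
have nzM : nonzero_module (quotmod Isub) by exists (pi a).
have [_ simple] := indec_simple _ nzM (indecomposable_of_common_multiple pia a_mul).
have [ann0|annT] := simple _ (is_submodule_scale_eq0 _ a).
  apply: pia; apply: ann0; rewrite -quotmod_piZ; apply/quotmod_pi_eq0; apply: a2I.
  by exists 1; rewrite scale1r expr2.
have a1 : a *: (1 : R^o) = a := mulr1 a.
by apply: pia; have := annT (pi 1); rewrite -quotmod_piZ a1.
Qed.

Theorem theorem2p11 (R : comPzRingType) :
  von_neumann_regular R <->
  (forall M : lmodType R, nonzero_module M -> indecomposable_module M -> simple_module M).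
Proof.
split=> [vnrR M _ indecM|]; first exact: vnr_indecomposable_simple.
exact: vnr_of_indecomposable_simple.
Qed.
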